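(* Let $M$ be a Puiseux monoid, $R$ a GCD-domain, and $F$ the field of fractions of $R$. Then an element $f \in R[M]\setminus R$ is irreducible in $R[M]$ if and only if $f$ is primitive in $R[M]$ and $f$ is irreducible in $F[M]$.
   Context: A Puiseux monoid is an additive submonoid of $(\mathbb{Q}_{\ge 0},+)$. For a commutative ring $R$ and a Puiseux monoid $M$, $R[M]$ denotes the semigroup ring of $M$ over $R$ (finite formal sums $\sum_{s\in M} f(s)X^s$ with $X^sX^t=X^{s+t}$). Every nonzero $f\in R[M]$ has a unique canonical form $f=\alpha_1X^{q_1}+\dots+\alpha_kX^{q_k}$ with all $\alpha_i\neq 0$ and $q_1>\dots>q_k$. For $R$ a GCD-domain, the content $\mathsf{c}(f)$ is the set of greatest common divisors of $\alpha_1,\dots,\alpha_k$ in $R$, and $f$ is called primitive if $\mathsf{c}(f)\subseteq R^\times$ (the units of $R$). $R[M]$ is an integral domain whose units are exactly $R^\times$ when $R$ is an integral domain. *)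

From HB Require Import structures.
From mathcomp Require Import all_boot all_order all_algebra.
Set Implicit Arguments. Unset Strict Implicit. Unset Printing Implicit Defensive.
Import Order.TTheory GRing.Theory Num.Theory.
Local Open Scope ring_scope.

Definition puiseux_monoid (M : pred rat) : Prop :=
  [/\ (0 : rat) \in M,
      (forall p q : rat, p \in M -> q \in M -> p + q \in M) &
      (forall q : rat, q \in M -> 0 <= q)].

(* Elements of the semigroup ring R[M] are represented by finite formal sums
   sum_i r_i X^{q_i}, given as a list of pairs (q_i, r_i).  Two formal sums
   denote the same element iff they have the same coefficient function. *)
Definition fcoef (R : comNzRingType) (f : seq (rat * R)) (q : rat) : R :=
  \sum_(x <- f | x.1 == q) x.2.

Definition in_sring (R : comNzRingType) (M : pred rat) (f : seq (rat * R)) : bool :=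
  all (fun x => x.1 \in M) f.

Definition feq (R : comNzRingType) (f g : seq (rat * R)) : Prop :=
  forall q, fcoef f q = fcoef g q.

Definition fmul (R : comNzRingType) (f g : seq (rat * R)) : seq (rat * R) :=
  [seq (x.1 + y.1, x.2 * y.2) | x <- f, y <- g].

Definition fone (R : comNzRingType) : seq (rat * R) := [:: (0, 1)].

Definition sr_unit (R : comNzRingType) (M : pred rat) (f : seq (rat * R)) : Prop :=
  exists2 g, in_sring M g & feq (fmul f g) (fone R).

Definition sr_irreducible (R : comNzRingType) (M : pred rat) (f : seq (rat * R)) : Prop :=
  [/\ ~ feq f [::], ~ sr_unit M f &
      forall g h, in_sring M g -> in_sring M h -> feq f (fmul g h) ->
        sr_unit M g \/ sr_unit M h].

Definition sr_const (R : comNzRingType) (f : seq (rat * R)) : Prop :=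
  forall q : rat, q != 0 -> fcoef f q = 0.

Definition rdvd (R : comNzRingType) (d a : R) : Prop := exists c, a = c * d.

Definition is_gcd (R : comNzRingType) (S : R -> Prop) (d : R) : Prop :=
  (forall a, S a -> rdvd d a) /\
  (forall e, (forall a, S a -> rdvd e a) -> rdvd e d).

Definition gcd_domain (R : idomainType) : Prop :=
  forall a b : R, exists d, is_gcd (fun x => x = a \/ x = b) d.

Definition content (R : comNzRingType) (f : seq (rat * R)) (d : R) : Prop :=
  is_gcd (fun a => exists q, fcoef f q != 0 /\ a = fcoef f q) d.

Definition primitive (R : idomainType) (f : seq (rat * R)) : Prop :=
  forall d, content f d -> d \is a GRing.unit.

Definition to_frac_sring (R : idomainType) (f : seq (rat * R))
  : seq (rat * {fraction R}) :=
  [seq (x.1, @FracField.tofrac R x.2) | x <- f].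

(* Finitely many elements of R[M] have all their exponents in (1/N)N for a
   common N, and X^(n/N) |-> X^n transports products, units (the units of the
   coefficient ring) and contents to R[X]. So let f be nonconstant, with image
   p in R[X]. If f is irreducible, a common divisor d of its coefficients
   splits off as the constant factor d, hence is a unit; and a factorization
   p = G H over F lifts, by clearing denominators and Gauss's lemma for GCD
   domains, to p = G1 H1 over R with G1, H1 proportional to G, H; in
   particular their exponents still lie in M. Conversely, if f is primitive
   and irreducible over F, a factor of f that becomes a unit over F is a
   constant dividing every coefficient of f, hence a unit. *)

From HB Require Import structures.
From mathcomp Require Import all_boot all_order all_algebra.
From mathcomp Require Import zify ring.
From Stdlib Require Import Classical.
Set Implicit Arguments. Unset Strict Implicit. Unset Printing Implicit Defensive.
Import Order.TTheory GRing.Theory Num.Theory.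
Local Open Scope ring_scope.

Section Divisibility.
Variable R : idomainType.
Implicit Types a b c d e x y : R.

Lemma rdvd_refl a : rdvd a a. Proof. by exists 1; rewrite mul1r. Qed.

Lemma rdvd0 a : rdvd a 0. Proof. by exists 0; rewrite mul0r. Qed.

Lemma rdvd0l_eq0 a : rdvd 0 a -> a = 0.
Proof. by move=> [k ->]; rewrite mulr0. Qed.

Lemma rdvd_trans a b c : rdvd a b -> rdvd b c -> rdvd a c.
Proof. by move=> [k ->] [l ->]; exists (l * k); rewrite mulrA. Qed.

Lemma rdvdD a b c : rdvd a b -> rdvd a c -> rdvd a (b + c).
Proof. by move=> [k ->] [l ->]; exists (k + l); rewrite mulrDl. Qed.

Lemma rdvdB a b c : rdvd a b -> rdvd a c -> rdvd a (b - c).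
Proof. by move=> [k ->] [l ->]; exists (k - l); rewrite mulrBl. Qed.

Lemma rdvdMl a b c : rdvd a b -> rdvd a (c * b).
Proof. by move=> [k ->]; exists (c * k); rewrite mulrA. Qed.

Lemma rdvdMr a b c : rdvd a b -> rdvd a (b * c).
Proof. by rewrite mulrC; apply: rdvdMl. Qed.

Lemma rdvd_mul a b c d : rdvd a b -> rdvd c d -> rdvd (a * c) (b * d).
Proof. by move=> [k ->] [l ->]; exists (k * l); rewrite mulrACA. Qed.

Lemma rdvd_mul2l y a b : y != 0 -> rdvd (y * a) (y * b) -> rdvd a b.
Proof. by move=> y0 [k]; rewrite mulrCA => /(mulfI y0) ->; exists k. Qed.

Lemma rdvd_unit a b : rdvd a b -> b \is a GRing.unit -> a \is a GRing.unit.
Proof. by move=> [k ->]; rewrite unitrM => /andP[]. Qed.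

Lemma rdvd_mulr_unit c d : c != 0 -> rdvd (c * d) c -> d \is a GRing.unit.
Proof.
move=> c0 [k]; rewrite mulrCA -{1}[c]mulr1 => /(mulfI c0) kd1.
by apply/unitrP; exists k; rewrite -kd1 mulrC.
Qed.

End Divisibility.

Section GcdDomain.
Variable R : idomainType.
Hypothesis hR : gcd_domain R.
Implicit Types a b c d e x y : R.

Definition is_rgcd a b d :=
  [/\ rdvd d a, rdvd d b & forall e, rdvd e a -> rdvd e b -> rdvd e d].

Lemma rgcd_exists a b : exists d, is_rgcd a b d.
Proof.
have [d [dab dmax]] := hR a b; exists d; split.
- by apply: dab; left.
- by apply: dab; right.
- by move=> e ea eb; apply: dmax => z [->|->].
Qed.

Lemma is_rgcdMl y a b d : is_rgcd a b d -> is_rgcd (y * a) (y * b) (y * d).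
Proof.
move=> [da db dmax]; split; try exact: rdvd_mul (rdvd_refl y) _.
have [->|y0] := eqVneq y 0; first by rewrite !mul0r => *; exact: rdvd0.
move=> e ea eb; have [g [ga gb gmax]] := rgcd_exists (y * a) (y * b).
apply: rdvd_trans (gmax e ea eb) _.
have [g' gE] : rdvd y g by apply: gmax; apply: rdvdMr; exact: rdvd_refl.
rewrite gE mulrC in ga gb *; apply: rdvd_mul (rdvd_refl y) _.
by apply: dmax; apply: (rdvd_mul2l y0).
Qed.

Lemma Gauss_rdvdr x y b d :
  is_rgcd x y d -> d \is a GRing.unit -> rdvd x (y * b) -> rdvd x b.
Proof.
move=> gcd_xy du xyb; have [_ _ bdmax] := is_rgcdMl b gcd_xy.
have := bdmax x (rdvdMl b (rdvd_refl x)); rewrite [b * y]mulrC => /(_ xyb) [k kx].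
by exists (k / d); rewrite mulrAC -kx mulrK.
Qed.

Lemma seq_rgcd_exists (s : seq R) :
  exists d, {in s, forall a, rdvd d a} /\
            forall e, {in s, forall a, rdvd e a} -> rdvd e d.
Proof.
elim: s => [|a s [d [ds dmax]]].
  by exists 0; split=> [a|e _]; [rewrite in_nil | exact: rdvd0].
have [g [ga gd gmax]] := rgcd_exists a d; exists g; split.
  by move=> z; rewrite inE => /predU1P[->|/ds]; [|exact: rdvd_trans].
move=> e es; apply: gmax; first by apply: es; exact: mem_head.
by apply: dmax => z zs; apply: es; rewrite inE zs orbT.
Qed.

End GcdDomain.

Section PrimitivePoly.
Variable R : idomainType.
Implicit Types (c d e x y : R) (p q : {poly R}).

Definition primitive_poly p :=
  forall d, (forall i, rdvd d p`_i) -> d \is a GRing.unit.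

Lemma primitive_poly_neq0 p : primitive_poly p -> p != 0.
Proof.
move=> pp; apply/eqP => p0; suff: (0 : R) \is a GRing.unit by rewrite unitr0.
by apply: pp => i; rewrite p0 coef0; exact: rdvd0.
Qed.

Lemma rdvd_coef_scale d p : (forall i, rdvd d p`_i) -> exists q, p = d *: q.
Proof.
move=> dp; have kP i : exists k, p`_i == k * d by have [k ->] := dp i; exists k.
exists (\poly_(i < size p) xchoose (kP i)); apply/polyP => i.
rewrite coefZ coef_poly; case: ltnP => [_|pi]; last by rewrite mulr0 nth_default.
by rewrite mulrC; exact: (eqP (xchooseP (kP i))).
Qed.

Lemma take_poly_lead p :
  p = take_poly (size p).-1 p + lead_coef p *: 'X^((size p).-1).
Proof.
apply/polyP => i; rewrite coefD coef_take_poly coefZ coefXn.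
case: ltngtP => [_|ni|->]; rewrite ?mulr0 ?addr0 ?mulr1 ?add0r //.
by rewrite nth_default // (leq_trans (leqSpred _) ni).
Qed.

Section Gcd.
Hypothesis hR : gcd_domain R.

Lemma primitive_poly_rdvdZ q x y :
  primitive_poly q -> (forall i, rdvd x (y * q`_i)) -> rdvd x y.
Proof.
move=> pq xyq; have [z [zx zy zmax]] := rgcd_exists hR x y.
have [z0|z0] := eqVneq z 0.
  by move: zy; rewrite z0 => /rdvd0l_eq0 ->; exact: rdvd0.
have [[x' xE] [y' yE]] := (zx, zy).
have [w gcd_xy'] := rgcd_exists hR x' y'.
have wu : w \is a GRing.unit.
  have [zw_x zw_y _] := is_rgcdMl hR z gcd_xy'.
  apply: (rdvd_mulr_unit z0); apply: zmax.
    by rewrite xE [x' * z]mulrC.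
  by rewrite yE [y' * z]mulrC.
have x'q i : rdvd x' q`_i.
  apply: (Gauss_rdvdr hR gcd_xy' wu); apply: (rdvd_mul2l z0).
  by rewrite mulrA [z * x']mulrC [z * y']mulrC -xE -yE.
apply: rdvd_trans zy; rewrite xE.
by exists x'^-1; rewrite mulrA mulVr ?mul1r //; exact: pq.
Qed.

Lemma primitive_part_exists p :
  p != 0 -> exists c q, [/\ c != 0, p = c *: q & primitive_poly q].
Proof.
move=> p0; have [c [cp cmax]] := seq_rgcd_exists hR p.
have cpi i : rdvd c p`_i.
  case: (ltnP i (size p)) => ip; first by apply: cp; exact: mem_nth.
  by rewrite nth_default //; exact: rdvd0.
have [q pE] := rdvd_coef_scale cpi.
have c0 : c != 0 by apply: contraNneq p0 => c0; rewrite pE c0 scale0r.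
exists c, q; split=> // d dq; apply: (rdvd_mulr_unit c0); apply: cmax => a ap.
by rewrite -(nth_index 0 ap) pE coefZ; apply: rdvd_mul (rdvd_refl c) (dq _).
Qed.

Lemma primitive_poly_assoc x y p q : x != 0 -> x *: p = y *: q ->
  primitive_poly p -> primitive_poly q -> exists2 u, u \is a GRing.unit & p = u *: q.
Proof.
move=> x0 xpyq pp pq; have xy i : x * p`_i = y * q`_i by rewrite -!coefZ xpyq.
have [k yE] : rdvd y x.
  by apply: (primitive_poly_rdvdZ pp) => i; rewrite xy; exact: rdvdMr (rdvd_refl y).
have [l xE] : rdvd x y.
  by apply: (primitive_poly_rdvdZ pq) => i; rewrite -xy; exact: rdvdMr (rdvd_refl x).
have kl : k * l = 1 by apply: (mulIf x0); rewrite mul1r -mulrA -xE -yE.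
exists l; first by apply/unitrPr; exists k; rewrite mulrC.
by apply/polyP => i; rewrite coefZ; apply: (mulfI x0); rewrite xy xE; ring.
Qed.

(* The induction step of Gauss's lemma, on size p + size q. *)
Lemma rdvd_coefM_lead_unit p q e : primitive_poly p ->
  (forall p', (size p' < size p)%N -> primitive_poly p' -> primitive_poly (p' * q)) ->
  (forall i, rdvd e (p * q)`_i) -> rdvd e (lead_coef p) -> e \is a GRing.unit.
Proof.
move=> pp IH epq elead; set n := (size p).-1; set p1 := take_poly n p.
have pE : p = p1 + lead_coef p *: 'X^n by exact: take_poly_lead.
have p1_lt : (size p1 < size p)%N.
  rewrite (leq_ltn_trans (size_take_poly _ _)) // prednK //.
  by rewrite size_poly_gt0 primitive_poly_neq0.
have ep1 i : rdvd e p1`_i.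
  have [->|p10] := eqVneq p1 0; first by rewrite coef0; exact: rdvd0.
  have [c [q1 [c0 p1E pq1]]] := primitive_part_exists p10.
  rewrite p1E coefZ; apply: rdvdMr; apply: (primitive_poly_rdvdZ (q := q1 * q)).
    by apply: IH => //; rewrite -(size_scale _ c0) -p1E.
  move=> j; rewrite -coefZ scalerAl -p1E.
  have -> : p1 * q = p * q - lead_coef p *: 'X^n * q by rewrite [in p * q]pE mulrDl addrK.
  by rewrite coefB -scalerAl coefZ; apply: rdvdB => //; exact: rdvdMr.
by apply: pp => i; rewrite pE coefD coefZ; apply: rdvdD => //; exact: rdvdMr.
Qed.

Lemma primitive_polyM p q :
  primitive_poly p -> primitive_poly q -> primitive_poly (p * q).
Proof.
move: {2}(size p + size q)%N (leqnn (size p + size q)) => n.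
elim: n p q => [|n IH] p q size_pq pp pq d dpq.
  by move: (primitive_poly_neq0 pp); rewrite -size_poly_gt0; lia.
have [e [ed elead emax]] := rgcd_exists hR d (lead_coef p).
have eu : e \is a GRing.unit.
  apply: (rdvd_coefM_lead_unit pp) elead => [p' p'_lt pp'|i].
    by apply: (IH p' q) => //; lia.
  exact: rdvd_trans (dpq i).
have dlead_q : rdvd d (lead_coef q).
  apply: (Gauss_rdvdr hR (And3 ed elead emax) eu).
  by rewrite -lead_coefM; exact: dpq.
apply: (rdvd_coefM_lead_unit (q := p) pq) dlead_q => [q' q'_lt pq'|i].
  by apply: (IH q' p) => //; lia.
by rewrite mulrC.
Qed.

End Gcd.
End PrimitivePoly.

Local Notation "x %:F" := (@FracField.tofrac _ x).

Section FractionField.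
Variable R : idomainType.
Local Notation F := {fraction R}.
Local Notation tofrac := (@FracField.tofrac R).
Implicit Types (p : {poly R}) (G H : {poly F}).

Lemma tofrac_inj : injective tofrac.
Proof. by move=> x y /eqP; rewrite tofrac_eq => /eqP. Qed.

Lemma size_map_tofrac p : size (map_poly tofrac p) = size p.
Proof. exact: size_map_inj_poly tofrac_inj (rmorph0 _) p. Qed.

Lemma map_tofrac_inj : injective (map_poly tofrac).
Proof. exact: map_inj_poly tofrac_inj (rmorph0 _). Qed.

Lemma frac_clear_den (x : F) : exists a b : R, b != 0 /\ x * b%:F = a%:F.
Proof.
elim/quotW: x => r; exists (frac r).1, (frac r).2; split; first exact: denom_ratioP.
unlock FracField.tofrac; rewrite /GRing.mul /= -FracField.pi_mul; apply/eqmodP.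
rewrite /= FracField.equivfE /FracField.mulf /= !numden_Ratio
  ?oner_neq0 ?mulr1 ?denom_ratioP //.
by rewrite mulrC.
Qed.

Lemma poly_clear_den G :
  exists2 a : R, a != 0 & exists G' : {poly R}, map_poly tofrac G' = a%:F *: G.
Proof.
elim/poly_ind: G => [|G c [a a0 [G' G'E]]].
  by exists 1; [exact: oner_neq0 | exists 0; rewrite map_poly0 scaler0].
have [x [b [b0 cbx]]] := frac_clear_den c.
exists (a * b); first by rewrite mulf_neq0.
exists (b *: G' * 'X + (a * x)%:P).
rewrite rmorphD rmorphM /= map_polyZ map_polyX map_polyC /= G'E !rmorphM /= -cbx.
by rewrite -!mul_polyC !polyCM; ring.
Qed.

Definition proportional (G1 : {poly R}) G :=
  exists2 k : F, k != 0 & map_poly tofrac G1 = k *: G.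

Lemma proportional_size (G1 : {poly R}) G : proportional G1 G -> size G1 = size G.
Proof. by move=> [k k0 G1E]; rewrite -size_map_tofrac G1E size_scale. Qed.

Lemma proportional_coef_eq0 (G1 : {poly R}) G i :
  proportional G1 G -> (G1`_i == 0) = (G`_i == 0).
Proof.
by move=> [k k0 G1E]; rewrite -tofrac_eq0 -coef_map G1E coefZ mulf_eq0 (negbTE k0).
Qed.

Lemma proportionalZl u (G1 : {poly R}) G :
  u != 0 -> proportional G1 G -> proportional (u *: G1) G.
Proof.
move=> u0 [k k0 G1E]; exists (u%:F * k); first by rewrite mulf_neq0 ?tofrac_eq0.
by rewrite map_polyZ G1E scalerA.
Qed.

Lemma proportional_scale (a c : R) (G1 : {poly R}) G : a != 0 -> c != 0 ->
  c%:F *: map_poly tofrac G1 = a%:F *: G -> proportional G1 G.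
Proof.
move=> a0 c0 G1E; exists (c%:F^-1 * a%:F).
  by rewrite mulf_neq0 ?invr_eq0 ?tofrac_eq0.
by rewrite -scalerA -G1E scalerA mulVf ?scale1r ?tofrac_eq0.
Qed.

Lemma proportional_unit (G1 : {poly R}) G :
  proportional G1 G -> G1 \is a GRing.unit -> G \is a GRing.unit.
Proof.
move=> G1G; rewrite !poly_unitE (proportional_size G1G) => /andP[-> G10] /=.
rewrite unitfE -(proportional_coef_eq0 0 G1G).
by apply: contraTneq G10 => ->; rewrite unitr0.
Qed.

Lemma primitive_poly_factor_unit p (A B : {poly R}) : primitive_poly p -> p = A * B ->
  map_poly tofrac A \is a GRing.unit -> A \is a GRing.unit.
Proof.
move=> pp pAB; rewrite !poly_unitE size_map_tofrac => /andP[/eqP A1 _].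
have AE := size1_polyC (eq_leq A1); rewrite A1 eqxx /=; set c := A`_0 in AE *.
by apply: pp => i; rewrite pAB AE mul_polyC coefZ; exact: rdvdMr (rdvd_refl c).
Qed.

Section Gcd.
Hypothesis hR : gcd_domain R.

Lemma primitive_poly_frac G : G != 0 -> exists (a c : R) (G1 : {poly R}),
  [/\ a != 0, c != 0, primitive_poly G1 & c%:F *: map_poly tofrac G1 = a%:F *: G].
Proof.
move=> G0; have [a a0 [G' G'E]] := poly_clear_den G.
have G'0 : G' != 0.
  by rewrite -(inj_eq map_tofrac_inj) rmorph0 G'E scaler_eq0 tofrac_eq0 negb_or a0.
have [c [G1 [c0 G'cG1 pG1]]] := primitive_part_exists hR G'0.
by exists a, c, G1; split; rewrite // -map_polyZ -G'cG1.
Qed.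

Lemma primitive_poly_factor_lift p G H : primitive_poly p ->
  map_poly tofrac p = G * H ->
  exists G1 H1 : {poly R}, [/\ p = G1 * H1, proportional G1 G & proportional H1 H].
Proof.
move=> pp pGH; have := primitive_poly_neq0 pp.
rewrite -(inj_eq map_tofrac_inj) rmorph0 pGH mulf_eq0 negb_or => /andP[G0 H0].
have [a [c [G1 [a0 c0 pG1 G1E]]]] := primitive_poly_frac G0.
have [b [d [H1 [b0 d0 pH1 H1E]]]] := primitive_poly_frac H0.
have abp : (a * b) *: p = (c * d) *: (G1 * H1).
  apply: map_tofrac_inj; rewrite !map_polyZ !rmorphM /= pGH -!mul_polyC !polyCM.
  rewrite -!mul_polyC in G1E H1E.
  by rewrite [LHS]mulrACA [RHS]mulrACA G1E H1E.
have [u uu pE] :=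
  primitive_poly_assoc hR (mulf_neq0 a0 b0) abp pp (primitive_polyM hR pG1 pH1).
exists (u *: G1), H1; split; first by rewrite pE scalerAl.
  apply: proportionalZl (proportional_scale a0 c0 G1E).
  by apply: contraTneq uu => ->; rewrite unitr0.
exact: proportional_scale b0 d0 H1E.
Qed.

End Gcd.
End FractionField.

Definition on_grid (N : nat) (q : rat) := exists n : nat, q = n%:R / N%:R.

Definition grid_index (N : nat) (q : rat) : nat := `|numq (q * N%:R)|%N.

Section Grid.
Variable N : nat.
Hypothesis N_gt0 : (0 < N)%N.

Lemma grid_indexE n : grid_index N (n%:R / N%:R) = n.
Proof. by rewrite /grid_index mulfVK ?pnatr_eq0 -?lt0n // pmulrn numq_int. Qed.

Lemma grid_index_eq q n : on_grid N q -> (grid_index N q == n) = (q == n%:R / N%:R).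
Proof.
move=> [m ->]; rewrite grid_indexE; apply/eqP/eqP => [->//|].
by move/(congr1 (grid_index N)); rewrite !grid_indexE.
Qed.

Lemma eqr_grid m n : (m%:R / N%:R == n%:R / N%:R :> rat) = (m == n).
Proof. by rewrite -grid_index_eq ?grid_indexE //; exists m. Qed.

Lemma on_grid0 : on_grid N 0.
Proof. by exists 0%N; rewrite mul0r. Qed.

Lemma grid_index0 : grid_index N 0 = 0%N.
Proof. by rewrite /grid_index mul0r. Qed.

Lemma on_gridD q1 q2 : on_grid N q1 -> on_grid N q2 ->
  on_grid N (q1 + q2) /\ grid_index N (q1 + q2) = (grid_index N q1 + grid_index N q2)%N.
Proof.
move=> [n1 ->] [n2 ->]; rewrite -mulrDl -natrD !grid_indexE.
by split; first exists (n1 + n2)%N.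
Qed.

Lemma on_grid_denq q : 0 <= q -> (`|denq q| %| N)%N -> on_grid N q.
Proof.
move=> q0 /dvdnP [k NE]; exists (k * `|numq q|)%N.
have k0 : k != 0%N by apply: contraTneq N_gt0 => k0; rewrite NE k0.
rewrite NE !natrM -mulf_div divff ?pnatr_eq0 // mul1r !natr_absz.
by rewrite !ger0_norm ?numq_ge0 ?(ltW (denq_gt0 q)) ?divq_num_den.
Qed.

End Grid.

Section PolyOfSum.
Variables (K : idomainType) (N : nat).
Hypothesis N_gt0 : (0 < N)%N.
Implicit Types (f g h : seq (rat * K)) (p A B : {poly K}).

Definition grid_sum f := {in f, forall x, on_grid N x.1}.

(* On formal sums whose exponents lie in (1/N)N, X^(n/N) |-> X^n is a ring
   isomorphism onto K[X]; sum_of_poly, its inverse, lists only the nonzero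
   coefficients, so that every exponent it produces lies in the support. *)
Definition poly_of_sum f : {poly K} := \sum_(x <- f) x.2 *: 'X^(grid_index N x.1).

Definition sum_of_poly p : seq (rat * K) :=
  [seq (i%:R / N%:R, p`_i) | i <- iota 0 (size p) & p`_i != 0].

Lemma grid_sum_cat f g : grid_sum (f ++ g) <-> grid_sum f /\ grid_sum g.
Proof.
split=> [fg|[fN gN] x]; first by split=> x xf; apply: fg; rewrite mem_cat xf ?orbT.
by rewrite mem_cat => /orP[/fN|/gN].
Qed.

Lemma coef_poly_of_sum f i :
  grid_sum f -> (poly_of_sum f)`_i = fcoef f (i%:R / N%:R).
Proof.
move=> fN; rewrite /poly_of_sum coef_sum /fcoef [RHS]big_mkcond /=.
apply: eq_big_seq => x xf; rewrite coefZ coefXn eq_sym grid_index_eq //; last exact: fN.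
by case: ifP; rewrite ?mulr1 ?mulr0.
Qed.

Lemma fcoef_off_grid f q : grid_sum f -> ~ on_grid N q -> fcoef f q = 0.
Proof.
move=> fN qN; rewrite /fcoef big_seq_cond big1 // => x /andP[xf /eqP xq].
by case: qN; rewrite -xq; exact: fN.
Qed.

Lemma feq_poly_of_sum f g : grid_sum f -> grid_sum g ->
  feq f g <-> poly_of_sum f = poly_of_sum g.
Proof.
move=> fN gN; split=> [fg|fg q]; first by apply/polyP => i; rewrite !coef_poly_of_sum.
have [[n ->]|qN] := classic (on_grid N q); first by rewrite -!coef_poly_of_sum // fg.
by rewrite !fcoef_off_grid.
Qed.

Lemma grid_sum_fmul f g : grid_sum f -> grid_sum g -> grid_sum (fmul f g).
Proof.
move=> fN gN _ /allpairsP[[x y] [xf yg ->]] /=.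
by case: (on_gridD N_gt0 (fN x xf) (gN y yg)).
Qed.

Lemma poly_of_sum_fmul f g : grid_sum f -> grid_sum g ->
  poly_of_sum (fmul f g) = poly_of_sum f * poly_of_sum g.
Proof.
move=> fN gN; rewrite /poly_of_sum /fmul big_allpairs_dep /= mulr_suml.
apply: eq_big_seq => x xf; rewrite mulr_sumr; apply: eq_big_seq => y yg /=.
have [_ ->] := on_gridD N_gt0 (fN x xf) (gN y yg).
by rewrite -scalerAl -scalerAr scalerA exprD.
Qed.

Lemma feq_fmul_poly f g h : grid_sum f -> grid_sum g -> grid_sum h ->
  feq f (fmul g h) <-> poly_of_sum f = poly_of_sum g * poly_of_sum h.
Proof.
move=> fN gN hN; rewrite -poly_of_sum_fmul //.
by apply: feq_poly_of_sum => //; exact: grid_sum_fmul.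
Qed.

Lemma grid_sum_fone : grid_sum (fone K).
Proof. by move=> x; rewrite inE => /eqP -> /=; exact: on_grid0. Qed.

Lemma poly_of_sum_fone : poly_of_sum (fone K) = 1.
Proof. by rewrite /poly_of_sum big_seq1 /= grid_index0 expr0 scale1r. Qed.

Lemma sr_const_poly_of_sum f :
  grid_sum f -> sr_const f <-> (size (poly_of_sum f) <= 1)%N.
Proof.
move=> fN; split=> [fc|/leq_sizeP fc q q0].
  apply/leq_sizeP => i i_gt0; rewrite coef_poly_of_sum // fc //.
  by rewrite mulf_neq0 ?invr_eq0 ?pnatr_eq0 -?lt0n.
have [[n qE]|qN] := classic (on_grid N q); last by rewrite fcoef_off_grid.
rewrite qE -coef_poly_of_sum // fc //.
by case: n qE => // qE; rewrite qE mul0r eqxx in q0.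
Qed.

Lemma grid_sum_of_poly p : grid_sum (sum_of_poly p).
Proof. by move=> _ /mapP[i _ ->]; exists i. Qed.

Lemma sum_of_polyK p : poly_of_sum (sum_of_poly p) = p.
Proof.
apply/polyP => k; rewrite coef_poly_of_sum; last exact: grid_sum_of_poly.
rewrite /fcoef big_map big_filter_cond /=.
under eq_bigl => i do rewrite eqr_grid //.
rewrite big_mkcondl (eq_bigr (fun i => p`_i)); last by move=> i _; case: eqP.
have -> : iota 0 (size p) = index_iota 0 (size p) by rewrite /index_iota subn0.
by rewrite big_nat1_eq /=; case: ltnP => // ?; rewrite nth_default.
Qed.

Lemma feq_sum_of_polyM f A B : grid_sum f -> poly_of_sum f = A * B ->
  feq f (fmul (sum_of_poly A) (sum_of_poly B)).
Proof.
by move=> fN fAB; apply/feq_fmul_poly; rewrite ?sum_of_polyK //; exact: grid_sum_of_poly.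
Qed.

Lemma in_sring_sum_of_poly (M : pred rat) p :
  (forall i, p`_i != 0 -> i%:R / N%:R \in M) -> in_sring M (sum_of_poly p).
Proof.
move=> pM; apply/allP => x /mapP[i]; rewrite mem_filter => /andP[pi _] ->.
exact: pM.
Qed.

Lemma in_sring_sum_of_polyC (M : pred rat) (c : K) :
  0 \in M -> in_sring M (sum_of_poly c%:P).
Proof. by move=> M0; apply: in_sring_sum_of_poly => -[|i]; rewrite coefC ?mul0r ?eqxx. Qed.

Lemma in_sring_coef_poly_of_sum (M : pred rat) f i : grid_sum f -> in_sring M f ->
  (poly_of_sum f)`_i != 0 -> i%:R / N%:R \in M.
Proof.
move=> fN /allP fM; rewrite coef_poly_of_sum // /fcoef; apply: contraNT => iM.
rewrite big_seq_cond big1 // => x /andP[xf /eqP xi].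
by move: (fM x xf); rewrite xi (negbTE iM).
Qed.

End PolyOfSum.

Section SemigroupRingUnits.
Variables (K : idomainType) (M : pred rat).
Hypothesis hM : puiseux_monoid M.
Implicit Types f g h : seq (rat * K).

Lemma in_sring_cat f g : in_sring M (f ++ g) = in_sring M f && in_sring M g.
Proof. exact: all_cat. Qed.

Lemma sring_grid f : in_sring M f -> exists2 N, (0 < N)%N & grid_sum N f.
Proof.
case: hM => _ _ M_ge0 /allP fM; set N := (\prod_(x <- f) `|denq x.1|)%N.
have N_gt0 : (0 < N)%N by rewrite prodn_gt0 // => x; rewrite absz_gt0 denq_neq0.
exists N => // x xf; apply: (on_grid_denq N_gt0); first exact/M_ge0/fM.
by rewrite /N (big_rem x) //= dvdn_mulr.
Qed.

Lemma poly_of_sum_unitE N f : (0 < N)%N -> grid_sum N f ->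
  poly_of_sum N f \is a GRing.unit <-> sr_const f /\ fcoef f 0 \is a GRing.unit.
Proof.
move=> N_gt0 fN; rewrite poly_unitE coef_poly_of_sum // mul0r.
split=> [/andP[/eqP size1 ->]|[/(sr_const_poly_of_sum N_gt0 fN) size_le1 f0u]].
  by split=> //; apply/(sr_const_poly_of_sum N_gt0 fN); rewrite size1.
rewrite f0u eqn_leq size_le1 lt0n size_poly_eq0 andbT.
apply: contraTneq f0u => f0.
by have := coef_poly_of_sum N_gt0 0%N fN; rewrite mul0r f0 coef0 => <-; rewrite unitr0.
Qed.

Lemma sr_unitP f :
  in_sring M f -> sr_unit M f <-> sr_const f /\ fcoef f 0 \is a GRing.unit.
Proof.
move=> fM; split=> [[g gM fg1]|fu].
  have /sring_grid[N N_gt0 /grid_sum_cat[fN gN]] : in_sring M (f ++ g).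
    by rewrite in_sring_cat fM.
  apply/(poly_of_sum_unitE N_gt0 fN)/unitrPr; exists (poly_of_sum N g).
  rewrite -(poly_of_sum_fone K N) -poly_of_sum_fmul //.
  exact: (feq_poly_of_sum N_gt0 (grid_sum_fmul N_gt0 fN gN) (@grid_sum_fone K N)).1.
have [N N_gt0 fN] := sring_grid fM.
have /unitrPr[P fP1] := (poly_of_sum_unitE N_gt0 fN).2 fu.
have /size1_polyC PE : (size P <= 1)%N.
  have Pu : P \is a GRing.unit by apply/unitrPr; exists (poly_of_sum N f); rewrite mulrC.
  by move: Pu; rewrite poly_unitE => /andP[/eqP ->].
exists (sum_of_poly N P); first by rewrite PE; apply: in_sring_sum_of_polyC; case: hM.
have PN := @grid_sum_of_poly K N P.
apply/(feq_poly_of_sum N_gt0 (grid_sum_fmul N_gt0 fN PN) (@grid_sum_fone K N)).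
by rewrite poly_of_sum_fmul // sum_of_polyK // poly_of_sum_fone.
Qed.

Lemma sr_unit_poly N f : (0 < N)%N -> in_sring M f -> grid_sum N f ->
  sr_unit M f <-> poly_of_sum N f \is a GRing.unit.
Proof.
move=> N_gt0 fM fN; apply: iff_trans (sr_unitP fM) _.
by apply: iff_sym; exact: poly_of_sum_unitE.
Qed.

Lemma sr_unit_sum_of_poly N (p : {poly K}) : (0 < N)%N -> in_sring M (sum_of_poly N p) ->
  sr_unit M (sum_of_poly N p) <-> p \is a GRing.unit.
Proof.
move=> N_gt0 pS; rewrite -[X in X \is a _](sum_of_polyK N_gt0 p).
exact: sr_unit_poly N_gt0 pS (@grid_sum_of_poly _ N p).
Qed.

Lemma sr_irreducibleE f : in_sring M f -> ~ sr_const f ->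
  sr_irreducible M f <-> forall g h, in_sring M g -> in_sring M h ->
    feq f (fmul g h) -> sr_unit M g \/ sr_unit M h.
Proof.
move=> fM fnc; split=> [[]//|fact]; split=> //.
  by move=> f0; apply: fnc => q _; rewrite f0 /fcoef big_nil.
by move/(sr_unitP fM) => [].
Qed.

End SemigroupRingUnits.

Section Content.
Variable R : idomainType.
Implicit Types f : seq (rat * R).

Definition primitive_sum f :=
  forall d, (forall q, rdvd d (fcoef f q)) -> d \is a GRing.unit.

Lemma fcoef_mem f q : fcoef f q != 0 -> q \in map fst f.
Proof.
apply: contraR => qf; rewrite /fcoef big_seq_cond big1 // => x /andP[xf /eqP xq].
by case/negP: qf; rewrite -xq; exact: map_f.
Qed.

Lemma primitiveE f : gcd_domain R -> primitive f <-> primitive_sum f.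
Proof.
move=> hR; split=> [pf d dq|pf d [dq _]]; last first.
  apply: pf => q; have [->|q0] := eqVneq (fcoef f q) 0; first exact: rdvd0.
  by apply: dq; exists q.
have [c [cs cmax]] := seq_rgcd_exists hR [seq fcoef f q | q <- map fst f].
have cf : content f c.
  split=> [_ [q [q0 ->]]|e es]; first by apply: cs; apply: map_f; exact: fcoef_mem.
  apply: cmax => _ /mapP[q _ ->]; have [->|q0] := eqVneq (fcoef f q) 0.
    exact: rdvd0.
  by apply: es; exists q.
by apply: rdvd_unit (pf c cf); apply: cmax => _ /mapP[q _ ->].
Qed.

Lemma primitive_poly_of_sum N f : (0 < N)%N -> grid_sum N f ->
  primitive_sum f <-> primitive_poly (poly_of_sum N f).
Proof.
move=> N_gt0 fN; split=> pf d dp; apply: pf; last by move=> i; rewrite coef_poly_of_sum.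
move=> q; have [[n ->]|qN] := classic (on_grid N q); first by rewrite -coef_poly_of_sum.
by rewrite (fcoef_off_grid fN qN); exact: rdvd0.
Qed.

End Content.

Section FracSums.
Variable R : idomainType.
Local Notation tf := (@to_frac_sring R).
Implicit Types f g : seq (rat * R).

Lemma fcoef_frac f q : fcoef (tf f) q = (fcoef f q)%:F.
Proof. by rewrite /fcoef /to_frac_sring big_map rmorph_sum. Qed.

Lemma to_frac_fmul f g : tf (fmul f g) = fmul (tf f) (tf g).
Proof.
rewrite /to_frac_sring /fmul map_allpairs allpairs_mapl allpairs_mapr.
by apply: eq_allpairs => x y; rewrite /= rmorphM.
Qed.

Lemma in_sring_frac M f : in_sring M f -> in_sring M (tf f).
Proof. by rewrite /in_sring all_map. Qed.

Lemma feq_frac f g : feq f g -> feq (tf f) (tf g).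
Proof. by move=> fg q; rewrite !fcoef_frac fg. Qed.

Lemma sr_const_frac f : sr_const (tf f) <-> sr_const f.
Proof.
split=> fc q q0; move: (fc q q0); rewrite ?fcoef_frac; last by move->; rewrite rmorph0.
by move/eqP; rewrite tofrac_eq0 => /eqP.
Qed.

Lemma grid_sum_frac N f : grid_sum N (tf f) <-> grid_sum N f.
Proof.
split=> fN x xf; last by move: xf => /mapP[y yf ->]; exact: fN.
by apply: (fN (x.1, x.2%:F)); apply/mapP; exists x.
Qed.

Lemma poly_of_sum_frac N f :
  poly_of_sum N (tf f) = map_poly (@FracField.tofrac R) (poly_of_sum N f).
Proof.
rewrite /poly_of_sum big_map rmorph_sum.
by apply: eq_bigr => x _; rewrite /= map_polyZ map_polyXn.
Qed.

End FracSums.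

Section Main.
Variables (M : pred rat) (R : idomainType).
Hypotheses (hM : puiseux_monoid M) (hR : gcd_domain R).
Local Notation tf := (@to_frac_sring R).
Local Notation tofrac := (@FracField.tofrac R).
Implicit Types f g h : seq (rat * R).

Lemma irreducible_primitive f : in_sring M f -> ~ sr_const f ->
  sr_irreducible M f -> primitive_sum f.
Proof.
move=> fS fnc /(sr_irreducibleE hM fS fnc) fact.
have [N N_gt0 fN] := sring_grid hM fS.
apply/(primitive_poly_of_sum N_gt0 fN) => d dp; have [p fE] := rdvd_coef_scale dp.
have size_f : (1 < size (poly_of_sum N f))%N.
  by rewrite ltnNge; apply: contra_notN fnc => /(sr_const_poly_of_sum N_gt0 fN).
have d0 : d != 0 by apply: contraTneq size_f => d0; rewrite fE d0 scale0r size_poly0.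
have dS : in_sring M (sum_of_poly N d%:P) by apply: in_sring_sum_of_polyC; case: hM.
have pS : in_sring M (sum_of_poly N p).
  apply: in_sring_sum_of_poly => i pi; apply: (in_sring_coef_poly_of_sum N_gt0 fN fS).
  by rewrite fE coefZ mulf_neq0.
have fdp : poly_of_sum N f = d%:P * p by rewrite fE mul_polyC.
case: (fact _ _ dS pS (feq_sum_of_polyM N_gt0 fN fdp)).
  by move/(sr_unit_sum_of_poly hM N_gt0 dS); rewrite poly_unitE coefC => /andP[].
move/(sr_unit_sum_of_poly hM N_gt0 pS); rewrite poly_unitE => /andP[/eqP p1 _].
by move: size_f; rewrite fE size_scale // p1.
Qed.

Lemma irreducible_of_frac f : in_sring M f -> ~ sr_const f -> primitive_sum f ->
  sr_irreducible M (tf f) -> sr_irreducible M f.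
Proof.
move=> fS fnc pf; have tfS := in_sring_frac fS.
have tfnc : ~ sr_const (tf f) by move/sr_const_frac.
move/(sr_irreducibleE hM tfS tfnc) => Ffact.
apply/(sr_irreducibleE hM fS fnc) => g h gS hS fgh.
have /(sring_grid hM)[N N_gt0 /grid_sum_cat[fN /grid_sum_cat[gN hN]]] :
  in_sring M (f ++ g ++ h) by rewrite !in_sring_cat fS gS hS.
have pp := (primitive_poly_of_sum N_gt0 fN).1 pf.
have unit_factor g' h' : in_sring M g' -> grid_sum N g' ->
    poly_of_sum N f = poly_of_sum N g' * poly_of_sum N h' ->
    sr_unit M (tf g') -> sr_unit M g'.
  move=> g'S g'N fE.
  move/(sr_unit_poly hM N_gt0 (in_sring_frac g'S) ((grid_sum_frac _ _).2 g'N)).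
  rewrite poly_of_sum_frac => /(primitive_poly_factor_unit pp fE) g'u.
  exact/(sr_unit_poly hM N_gt0 g'S g'N).
have fE := (feq_fmul_poly N_gt0 fN gN hN).1 fgh.
have tfgh : feq (tf f) (fmul (tf g) (tf h)) by rewrite -to_frac_fmul; exact: feq_frac.
case: (Ffact _ _ (in_sring_frac gS) (in_sring_frac hS) tfgh) => u; [left|right].
  exact: unit_factor gS gN fE u.
by apply: (unit_factor h g) => //; rewrite mulrC.
Qed.

Lemma irreducible_frac f : in_sring M f -> ~ sr_const f ->
  sr_irreducible M f -> sr_irreducible M (tf f).
Proof.
move=> fS fnc firr; have pf := irreducible_primitive fS fnc firr.
move/(sr_irreducibleE hM fS fnc): firr => fact.
have tfS := in_sring_frac fS; have tfnc : ~ sr_const (tf f) by move/sr_const_frac.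
apply/(sr_irreducibleE hM tfS tfnc) => g h gS hS fgh.
apply: NNPP => /not_or_and[gnu hnu].
have /(sring_grid hM)[N N_gt0 /grid_sum_cat[/grid_sum_frac fN /grid_sum_cat[gN hN]]] :
  in_sring M (tf f ++ g ++ h) by rewrite !in_sring_cat tfS gS hS.
have pGH : map_poly tofrac (poly_of_sum N f) = poly_of_sum N g * poly_of_sum N h.
  rewrite -poly_of_sum_frac; apply/(feq_fmul_poly N_gt0 _ gN hN) => //.
  exact/grid_sum_frac.
have pp := (primitive_poly_of_sum N_gt0 fN).1 pf.
have [G1 [H1 [fGH G1G H1H]]] := primitive_poly_factor_lift hR pp pGH.
have G1S : in_sring M (sum_of_poly N G1).
  apply: in_sring_sum_of_poly => i G1i; apply: (in_sring_coef_poly_of_sum N_gt0 gN gS).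
  by rewrite -(proportional_coef_eq0 i G1G).
have H1S : in_sring M (sum_of_poly N H1).
  apply: in_sring_sum_of_poly => i H1i; apply: (in_sring_coef_poly_of_sum N_gt0 hN hS).
  by rewrite -(proportional_coef_eq0 i H1H).
case: (fact _ _ G1S H1S (feq_sum_of_polyM N_gt0 fN fGH)).
  move/(sr_unit_sum_of_poly hM N_gt0 G1S)/(proportional_unit G1G) => Gu.
  by apply: gnu; apply/(sr_unit_poly hM N_gt0 gS gN).
move/(sr_unit_sum_of_poly hM N_gt0 H1S)/(proportional_unit H1H) => Hu.
by apply: hnu; apply/(sr_unit_poly hM N_gt0 hS hN).
Qed.

End Main.

Theorem mainTheorem2 (M : pred rat) (R : idomainType)
  (hM : puiseux_monoid M) (hR : gcd_domain R)
  (f : seq (rat * R)) (hf : in_sring M f) (hnc : ~ sr_const f) :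
  sr_irreducible M f <->
  (primitive f /\ sr_irreducible M (to_frac_sring f)).
Proof.
split=> [firr|[pf Firr]].
  split; last exact: (irreducible_frac hM hR hf hnc firr).
  exact/(primitiveE f hR)/(irreducible_primitive hM hf hnc firr).
by apply: (irreducible_of_frac hM hf hnc) Firr; apply/(primitiveE f hR).
Qed.
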